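(* (1) The relation $\sim$ is an equivalence relation on the set of positive ABMN solutions. (2) Each equivalence class contains exactly one standard solution and exactly one default solution.
   Context: ABMN system on $\mathbb{Z}$: real variables $a_i,b_i\ge0$, $m_i,n_i$ with, for all $i$, $(a_i+b_i)(m_i+a_i)=a_im_{i+1}+b_im_{i-1}$, $(a_i+b_i)(n_i+b_i)=a_in_{i+1}+b_in_{i-1}$, $(a_i+b_i)^2=b_i(m_{i+1}-m_{i-1})$, $(a_i+b_i)^2=a_i(n_{i-1}-n_{i+1})$; positive if all $a_i,b_i>0$; $m_{\pm\infty},n_{\pm\infty}$ denote the (real) limits of $m_i,n_i$ as $i\to\pm\infty$. For a quadruple of sequences $(a,b,m,n)$, $u>0$ and $v_1,v_2\in\mathbb{R}$, set $\tau_u(a,b,m,n)=(ua,ub,um,un)$ and $\chi_{v_1,v_2}(a,b,m,n)=(a,b,m+v_1,n+v_2)$. Two solutions are related by $\sim$ if one is the image of the other under $\tau_u\circ\chi_{v_1,v_2}$ for some such $u,v_1,v_2$. A positive solution is standard if $m_{-\infty}=0$, $n_\infty=0$, $m_\infty=1$; default if $m_{-\infty}=0$, $n_\infty=0$, $m_0-m_{-1}=1$. *)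

From Stdlib Require Import Reals ZArith Lra.
Open Scope R_scope.

Record quad := Quad { qa : Z -> R; qb : Z -> R; qm : Z -> R; qn : Z -> R }.

Definition ABMN (s : quad) : Prop :=
  forall i : Z,
    0 <= qa s i /\ 0 <= qb s i /\
    (qa s i + qb s i) * (qm s i + qa s i)
      = qa s i * qm s (i + 1)%Z + qb s i * qm s (i - 1)%Z /\
    (qa s i + qb s i) * (qn s i + qb s i)
      = qa s i * qn s (i + 1)%Z + qb s i * qn s (i - 1)%Z /\
    (qa s i + qb s i) ^ 2 = qb s i * (qm s (i + 1)%Z - qm s (i - 1)%Z) /\
    (qa s i + qb s i) ^ 2 = qa s i * (qn s (i - 1)%Z - qn s (i + 1)%Z).

Definition positive_ABMN (s : quad) : Prop :=
  ABMN s /\ forall i : Z, 0 < qa s i /\ 0 < qb s i.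

Definition lim_pinf (f : Z -> R) (L : R) : Prop :=
  forall eps : R, 0 < eps -> exists N : Z, forall i : Z, (N <= i)%Z -> Rabs (f i - L) < eps.
Definition lim_minf (f : Z -> R) (L : R) : Prop :=
  forall eps : R, 0 < eps -> exists N : Z, forall i : Z, (i <= N)%Z -> Rabs (f i - L) < eps.

Definition tau (u : R) (s : quad) : quad :=
  Quad (fun i => u * qa s i) (fun i => u * qb s i) (fun i => u * qm s i) (fun i => u * qn s i).
Definition chi (v1 v2 : R) (s : quad) : quad :=
  Quad (qa s) (qb s) (fun i => qm s i + v1) (fun i => qn s i + v2).

Definition image_of (s t : quad) : Prop :=
  exists u v1 v2 : R, 0 < u /\ t = tau u (chi v1 v2 s).
Definition abmn_rel (s t : quad) : Prop := image_of s t \/ image_of t s.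

Definition standard (s : quad) : Prop :=
  positive_ABMN s /\ lim_minf (qm s) 0 /\ lim_pinf (qn s) 0 /\ lim_pinf (qm s) 1.

Definition default_sol (s : quad) : Prop :=
  positive_ABMN s /\ lim_minf (qm s) 0 /\ lim_pinf (qn s) 0 /\ qm s 0%Z - qm s (-1)%Z = 1.

From Stdlib Require Import Reals ZArith Lra Lia Psatz FunctionalExtensionality.
Open Scope R_scope.

(* For a positive solution the equations reduce to
   m_(i+1) - m_i = 2 a_i + b_i,  b_i (m_i - m_(i-1)) = a_i^2,
   n_(i-1) - n_i = a_i + 2 b_i,  a_i (n_i - n_(i+1)) = b_i^2,
   so m increases and n decreases.  Combining them shows that a_i / b_i at
   least doubles at each step; hence eventually b_i <= a_i, and from then on
   a_i + b_i at least halves, so the increments of m and n are summable and the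
   limits m_(+oo), n_(+oo) exist.  The system is invariant under i |-> -i with
   a <-> b and m <-> n, which yields m_(-oo) as well.  Since m_(-oo) < m_(+oo)
   and m_0 - m_(-1) > 0, the three normalisations of a standard (resp. default)
   solution determine the parameters of tau_u o chi_(v1,v2) uniquely, and these
   maps form a group, whence the equivalence relation. *)

Lemma nondecreasing_from (f : Z -> R) (K : Z) :
  (forall i, (K <= i)%Z -> f i <= f (i + 1)%Z) ->
  forall i j, (K <= i)%Z -> (i <= j)%Z -> f i <= f j.
Proof.
  intros Hf i j Hi Hij.
  replace j with (i + Z.of_nat (Z.to_nat (j - i)))%Z by lia.
  induction (Z.to_nat (j - i)) as [|k IH].
  - rewrite Z.add_0_r; lra.
  - replace (i + Z.of_nat (S k))%Z with (i + Z.of_nat k + 1)%Z by lia.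
    apply (Rle_trans _ _ _ IH), Hf; lia.
Qed.

Lemma nondecreasing_le (f : Z -> R) :
  (forall i, f i <= f (i + 1)%Z) -> forall i j, (i <= j)%Z -> f i <= f j.
Proof. intros Hf i j. apply (nondecreasing_from f i); auto; lia. Qed.

Lemma lim_pinf_ext (f g : Z -> R) (L : R) :
  (forall i, f i = g i) -> lim_pinf f L -> lim_pinf g L.
Proof.
  intros Efg Hf eps Heps. destruct (Hf eps Heps) as [N HN].
  exists N; intros i Hi. rewrite <- Efg; auto.
Qed.

Lemma lim_pinf_unique (f : Z -> R) (L1 L2 : R) :
  lim_pinf f L1 -> lim_pinf f L2 -> L1 = L2.
Proof.
  intros H1 H2. destruct (Req_dec L1 L2) as [|neq]; auto.
  set (eps := Rabs (L1 - L2) / 2).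
  assert (Hd : 0 < Rabs (L1 - L2)) by (apply Rabs_pos_lt; lra).
  destruct (H1 eps) as [N1 HN1]; [unfold eps; lra|].
  destruct (H2 eps) as [N2 HN2]; [unfold eps; lra|].
  specialize (HN1 (Z.max N1 N2) (Z.le_max_l _ _)).
  specialize (HN2 (Z.max N1 N2) (Z.le_max_r _ _)).
  set (x := f (Z.max N1 N2)) in *.
  assert (Htri : Rabs (L1 - L2) <= Rabs (x - L1) + Rabs (x - L2)).
  { replace (L1 - L2) with (- (x - L1) + (x - L2)) by ring.
    rewrite <- (Rabs_Ropp (x - L1)). apply Rabs_triang. }
  unfold eps in *. lra.
Qed.

Lemma lim_pinf_affine (f : Z -> R) (L u v : R) :
  lim_pinf f L -> lim_pinf (fun i => u * (f i + v)) (u * (L + v)).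
Proof.
  intros Hf eps Heps.
  pose proof (Rabs_pos u) as Hu.
  destruct (Hf (eps / (Rabs u + 1))) as [N HN]; [apply Rdiv_lt_0_compat; lra|].
  exists N; intros i Hi. specialize (HN i Hi).
  replace (u * (f i + v) - u * (L + v)) with (u * (f i - L)) by ring.
  rewrite Rabs_mult.
  apply (Rmult_lt_compat_r (Rabs u + 1)) in HN; [|lra].
  unfold Rdiv in HN. rewrite Rmult_assoc, Rinv_l in HN by lra.
  pose proof (Rabs_pos (f i - L)). nra.
Qed.

Lemma lim_pinf_opp (f : Z -> R) (L : R) :
  lim_pinf (fun i => - f i) L -> lim_pinf f (- L).
Proof.
  intro Hf. replace (- L) with (-1 * (L + 0)) by ring.
  apply (lim_pinf_ext (fun i => -1 * (- f i + 0))); [intro; ring|].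
  exact (lim_pinf_affine _ _ _ _ Hf).
Qed.

Lemma lim_minf_reflect (f : Z -> R) (L : R) :
  lim_minf f L <-> lim_pinf (fun i => f (- i)%Z) L.
Proof.
  split; intros Hf eps Heps; destruct (Hf eps Heps) as [N HN]; exists (- N)%Z.
  - intros i Hi. apply HN; lia.
  - intros i Hi. rewrite <- (Z.opp_involutive i). apply HN; lia.
Qed.

Lemma lim_minf_unique (f : Z -> R) (L1 L2 : R) :
  lim_minf f L1 -> lim_minf f L2 -> L1 = L2.
Proof. rewrite !lim_minf_reflect. apply lim_pinf_unique. Qed.

Lemma lim_minf_affine (f : Z -> R) (L u v : R) :
  lim_minf f L -> lim_minf (fun i => u * (f i + v)) (u * (L + v)).
Proof. rewrite !lim_minf_reflect. apply lim_pinf_affine. Qed.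

Lemma nondecreasing_le_lim_pinf (f : Z -> R) (L : R) :
  (forall i, f i <= f (i + 1)%Z) -> lim_pinf f L -> forall i, f i <= L.
Proof.
  intros Hmono Hf i. apply Rnot_lt_le; intro Hlt.
  destruct (Hf (f i - L)) as [N HN]; [lra|].
  specialize (HN (Z.max N i) (Z.le_max_l _ _)).
  pose proof (nondecreasing_le f Hmono i (Z.max N i) (Z.le_max_r _ _)).
  apply Rabs_def2 in HN. lra.
Qed.

Lemma lim_minf_le_nondecreasing (f : Z -> R) (L : R) :
  (forall i, f i <= f (i + 1)%Z) -> lim_minf f L -> forall i, L <= f i.
Proof.
  intros Hmono Hf i. apply Rnot_lt_le; intro Hlt.
  destruct (Hf (L - f i)) as [N HN]; [lra|].
  specialize (HN (Z.min N i) (Z.le_min_l _ _)).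
  pose proof (nondecreasing_le f Hmono (Z.min N i) i (Z.le_min_r _ _)).
  apply Rabs_def2 in HN. lra.
Qed.

Lemma nondecreasing_bounded_ex_lim_pinf (f : Z -> R) (B : R) :
  (forall i, f i <= f (i + 1)%Z) -> (forall i, f i <= B) -> exists L, lim_pinf f L.
Proof.
  intros Hmono HB.
  set (u := fun k : nat => f (Z.of_nat k)).
  assert (Hu : Un_growing u).
  { intro k. unfold u. rewrite Nat2Z.inj_succ. apply Hmono. }
  destruct (growing_cv u Hu) as [L HL]; [exists B; intros x [k ->]; apply HB|].
  exists L; intros eps Heps. destruct (HL eps Heps) as [N HN].
  exists (Z.of_nat N); intros i Hi.
  assert (HiL : f i <= L).
  { replace i with (Z.of_nat (Z.to_nat i)) by lia. exact (growing_ineq u L Hu HL _). }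
  pose proof (nondecreasing_le f Hmono _ _ Hi).
  specialize (HN N (le_n N)). unfold R_dist, u in HN.
  apply Rabs_def2 in HN. apply Rabs_def1; lra.
Qed.

Lemma ex_lim_pinf_of_majorant (f g : Z -> R) (K : Z) :
  (forall i, f i <= f (i + 1)%Z) -> (forall i, 0 <= g i) ->
  (forall i, (K <= i)%Z -> f (i + 1)%Z + g (i + 1)%Z <= f i + g i) ->
  exists L, lim_pinf f L.
Proof.
  intros Hmono Hg Hmaj.
  apply (nondecreasing_bounded_ex_lim_pinf f (f K + g K) Hmono). intro i.
  destruct (Z.le_ge_cases K i) as [Hi|Hi].
  - pose proof (nondecreasing_from (fun j => - (f j + g j)) K) as Hdec.
    assert (- (f K + g K) <= - (f i + g i)).
    { apply Hdec; [intros j Hj; specialize (Hmaj j Hj); lra | lia | exact Hi]. }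
    specialize (Hg i). lra.
  - pose proof (nondecreasing_le f Hmono i K Hi). specialize (Hg K). lra.
Qed.

Lemma doubling_eventually_ge1 (r : Z -> R) :
  (forall i, 0 < r i) -> (forall i, 2 * r i <= r (i + 1)%Z) ->
  exists N, forall i, (N <= i)%Z -> 1 <= r i.
Proof.
  intros Hpos Hdouble.
  assert (Hmono : forall i, r i <= r (i + 1)%Z).
  { intro i. specialize (Hpos i). specialize (Hdouble i). lra. }
  assert (Hlin : forall k : nat, r 0%Z * (1 + INR k) <= r (Z.of_nat k)).
  { induction k as [|k IH]; [simpl; lra|].
    rewrite S_INR, Nat2Z.inj_succ. specialize (Hdouble (Z.of_nat k)).
    pose proof (Hpos 0%Z). pose proof (pos_INR k). unfold Z.succ. nra. }
  destruct (INR_unbounded (/ r 0%Z)) as [k Hk].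
  exists (Z.of_nat k); intros i Hi.
  pose proof (nondecreasing_le r Hmono _ _ Hi).
  pose proof (Hpos 0%Z) as H0. specialize (Hlin k).
  apply (Rmult_lt_compat_l (r 0%Z)) in Hk; [|exact H0].
  rewrite Rinv_r in Hk by lra. lra.
Qed.

Section PositiveSolution.
Variable s : quad.
Hypothesis Hs : positive_ABMN s.
Let a := qa s.
Let b := qb s.
Let m := qm s.
Let n := qn s.

Lemma a_pos i : 0 < a i.
Proof. apply (proj2 Hs i). Qed.

Lemma b_pos i : 0 < b i.
Proof. apply (proj2 Hs i). Qed.

Lemma m_step i : m (i + 1)%Z - m i = 2 * a i + b i.
Proof.
  destruct (proj1 Hs i) as (_ & _ & Em & _ & Em' & _).
  pose proof (a_pos i). pose proof (b_pos i).
  apply (Rmult_eq_reg_l (a i + b i)); [unfold a, b, m in *; lra | lra].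
Qed.

Lemma m_step_left i : b i * (m i - m (i - 1)%Z) = a i ^ 2.
Proof.
  destruct (proj1 Hs i) as (_ & _ & Em & _ & Em' & _).
  pose proof (m_step i). unfold a, b, m in *. nra.
Qed.

Lemma n_step i : n (i - 1)%Z - n i = a i + 2 * b i.
Proof.
  destruct (proj1 Hs i) as (_ & _ & _ & En & _ & En').
  pose proof (a_pos i). pose proof (b_pos i).
  apply (Rmult_eq_reg_l (a i + b i)); [unfold a, b, n in *; lra | lra].
Qed.

Lemma n_step_right i : a i * (n i - n (i + 1)%Z) = b i ^ 2.
Proof.
  destruct (proj1 Hs i) as (_ & _ & _ & En & _ & En').
  pose proof (n_step i). unfold a, b, n in *. nra.
Qed.

Lemma m_nondecreasing i : m i <= m (i + 1)%Z.
Proof. pose proof (m_step i). pose proof (a_pos i). pose proof (b_pos i). lra. Qed.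

Lemma n_nonincreasing i : n (i + 1)%Z <= n i.
Proof.
  pose proof (n_step (i + 1)). pose proof (a_pos (i + 1)). pose proof (b_pos (i + 1)).
  replace (i + 1 - 1)%Z with i in * by ring. lra.
Qed.

Lemma sqr_a_succ i : a (i + 1)%Z ^ 2 = b (i + 1)%Z * (2 * a i + b i).
Proof.
  rewrite <- m_step, <- m_step_left. replace (i + 1 - 1)%Z with i by ring. ring.
Qed.

Lemma sqr_b i : b i ^ 2 = a i * (a (i + 1)%Z + 2 * b (i + 1)%Z).
Proof.
  rewrite <- n_step_right, <- n_step. replace (i + 1 - 1)%Z with i by ring. ring.
Qed.

Lemma ratio_doubles i : 2 * (a i / b i) <= a (i + 1)%Z / b (i + 1)%Z.
Proof.
  pose proof (sqr_a_succ i) as Ea. pose proof (sqr_b i) as Eb.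
  pose proof (a_pos i). pose proof (b_pos i).
  pose proof (a_pos (i + 1)). pose proof (b_pos (i + 1)).
  set (x := a i) in *. set (y := b i) in *.
  set (X := a (i + 1)%Z) in *. set (Y := b (i + 1)%Z) in *.
  (* (X y)^2 = Y (2x + y) y^2 >= Y (2x + y) (2x Y) >= (2 x Y)^2 *)
  assert (Hsq : (2 * x * Y) ^ 2 <= (X * y) ^ 2).
  { assert (Hb2 : 2 * x * Y <= y ^ 2) by nra.
    replace ((X * y) ^ 2) with (Y * (2 * x + y) * y ^ 2) by (rewrite <- Ea; ring).
    assert (0 <= Y * (2 * x + y) * (y ^ 2 - 2 * x * Y)).
    { apply Rmult_le_pos; [|lra]. apply Rmult_le_pos; lra. }
    assert (0 <= 2 * x * Y * Y * y) by (repeat apply Rmult_le_pos; lra).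
    nra. }
  assert (Hcross : 2 * x * Y <= X * y) by nra.
  apply (Rmult_le_reg_r (y * Y)); [nra|].
  replace (2 * (x / y) * (y * Y)) with (2 * x * Y) by (field; lra).
  replace (X / Y * (y * Y)) with (X * y) by (field; lra). exact Hcross.
Qed.

Lemma eventually_b_le_a : exists N, forall i, (N <= i)%Z -> b i <= a i.
Proof.
  destruct (doubling_eventually_ge1 (fun i => a i / b i)) as [N HN].
  - intro i. apply Rdiv_lt_0_compat; [apply a_pos | apply b_pos].
  - exact ratio_doubles.
  - exists N; intros i Hi. specialize (HN i Hi). pose proof (b_pos i).
    apply (Rmult_le_compat_r (b i)) in HN; [|lra].
    unfold Rdiv in HN. rewrite Rmult_assoc, Rinv_l in HN by lra. lra.
Qed.

Lemma sum_halves i : b i <= a i -> a (i + 1)%Z + b (i + 1)%Z <= (a i + b i) / 2.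
Proof.
  intro Hba. pose proof (sqr_b i). pose proof (a_pos i). pose proof (b_pos i).
  pose proof (a_pos (i + 1)). pose proof (b_pos (i + 1)).
  assert (a (i + 1)%Z + 2 * b (i + 1)%Z <= b i) by nra. lra.
Qed.

Lemma ex_lim_pinf_m : exists L, lim_pinf m L.
Proof.
  destruct eventually_b_le_a as [N HN].
  apply (ex_lim_pinf_of_majorant m (fun i => 4 * (a i + b i)) N m_nondecreasing).
  - intro i. pose proof (a_pos i). pose proof (b_pos i). lra.
  - intros i Hi. pose proof (sum_halves i (HN i Hi)). pose proof (m_step i).
    pose proof (b_pos i). lra.
Qed.

Lemma ex_lim_pinf_n : exists L, lim_pinf n L.
Proof.
  destruct eventually_b_le_a as [N HN].
  destruct (ex_lim_pinf_of_majorant (fun i => - n i) (fun i => 2 * (a i + b i)) N)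
    as [L HL].
  - intro i. pose proof (n_nonincreasing i). lra.
  - intro i. pose proof (a_pos i). pose proof (b_pos i). lra.
  - intros i Hi. pose proof (sum_halves i (HN i Hi)). pose proof (n_step (i + 1)).
    pose proof (a_pos (i + 1)). pose proof (b_pos (i + 1)).
    replace (i + 1 - 1)%Z with i in * by ring. lra.
  - exists (- L). exact (lim_pinf_opp _ _ HL).
Qed.

End PositiveSolution.

Definition quad_rev (s : quad) : quad :=
  Quad (fun i => qb s (- i)%Z) (fun i => qa s (- i)%Z)
       (fun i => qn s (- i)%Z) (fun i => qm s (- i)%Z).

Lemma positive_ABMN_rev (s : quad) : positive_ABMN s -> positive_ABMN (quad_rev s).
Proof.
  intros [Habmn Hpos]. split; intro i; simpl.
  - destruct (Habmn (- i)%Z) as (Ha & Hb & Em & En & Em' & En').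
    replace (- (i + 1))%Z with (- i - 1)%Z by lia.
    replace (- (i - 1))%Z with (- i + 1)%Z by lia.
    repeat split; lra.
  - destruct (Hpos (- i)%Z). split; assumption.
Qed.

Lemma ex_lim_minf_m (s : quad) : positive_ABMN s -> exists L, lim_minf (qm s) L.
Proof.
  intro Hs. destruct (ex_lim_pinf_n _ (positive_ABMN_rev s Hs)) as [L HL].
  exists L. apply lim_minf_reflect. exact HL.
Qed.

Lemma quad_ext (s t : quad) :
  (forall i, qa s i = qa t i) -> (forall i, qb s i = qb t i) ->
  (forall i, qm s i = qm t i) -> (forall i, qn s i = qn t i) -> s = t.
Proof.
  destruct s, t; simpl; intros.
  f_equal; apply functional_extensionality; assumption.
Qed.

Lemma image_of_refl (s : quad) : image_of s s.
Proof. exists 1, 0, 0. split; [lra|]. apply quad_ext; intro i; simpl; ring. Qed.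

Lemma image_of_sym (s t : quad) : image_of s t -> image_of t s.
Proof.
  intros (u & v1 & v2 & Hu & ->). exists (/ u), (- u * v1), (- u * v2).
  split; [apply Rinv_0_lt_compat; exact Hu|].
  apply quad_ext; intro i; simpl; field; lra.
Qed.

Lemma image_of_trans (s t w : quad) : image_of s t -> image_of t w -> image_of s w.
Proof.
  intros (u & v1 & v2 & Hu & ->) (u' & v1' & v2' & Hu' & ->).
  exists (u * u'), (v1 + v1' / u), (v2 + v2' / u). split; [nra|].
  apply quad_ext; intro i; simpl; field; lra.
Qed.

Lemma abmn_rel_image_of (s t : quad) : abmn_rel s t -> image_of s t.
Proof. intros [H|H]; [exact H | exact (image_of_sym _ _ H)]. Qed.

Lemma positive_ABMN_image (s : quad) (u v1 v2 : R) :
  positive_ABMN s -> 0 < u -> positive_ABMN (tau u (chi v1 v2 s)).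
Proof.
  intros [Habmn Hpos] Hu. split; intro i; simpl.
  - destruct (Habmn i) as (Ha & Hb & Em & En & Em' & En'). repeat split; nra.
  - destruct (Hpos i). split; nra.
Qed.

Lemma unique_in_class (P : quad -> Prop) (s : quad) (u0 w1 w2 : R) :
  positive_ABMN s -> 0 < u0 ->
  (forall u v1 v2, 0 < u -> P (tau u (chi v1 v2 s)) <-> u = u0 /\ v1 = w1 /\ v2 = w2) ->
  exists t, positive_ABMN t /\ abmn_rel s t /\ P t /\
    forall t', positive_ABMN t' -> abmn_rel s t' -> P t' -> t' = t.
Proof.
  intros Hs Hu0 HP. exists (tau u0 (chi w1 w2 s)).
  split; [apply positive_ABMN_image; assumption|].
  split; [left; exists u0, w1, w2; split; auto|].
  split; [apply HP; auto|].
  intros t' _ Hrel Ht'.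
  destruct (abmn_rel_image_of _ _ Hrel) as (u & v1 & v2 & Hu & ->).
  apply HP in Ht' as (-> & -> & ->); auto.
Qed.

Section Normalization.
Variable s : quad.
Hypothesis Hs : positive_ABMN s.
Variables Lm Lp Ln : R.
Hypothesis HLm : lim_minf (qm s) Lm.
Hypothesis HLp : lim_pinf (qm s) Lp.
Hypothesis HLn : lim_pinf (qn s) Ln.

Lemma m_step_pos : 0 < qm s 0%Z - qm s (-1)%Z.
Proof.
  pose proof (m_step s Hs (-1)). pose proof (a_pos s Hs (-1)). pose proof (b_pos s Hs (-1)).
  simpl in *. lra.
Qed.

Lemma lim_minf_lt_lim_pinf : Lm < Lp.
Proof.
  pose proof (lim_minf_le_nondecreasing _ _ (m_nondecreasing s Hs) HLm (-1)).
  pose proof (nondecreasing_le_lim_pinf _ _ (m_nondecreasing s Hs) HLp 0).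
  pose proof m_step_pos. lra.
Qed.

Lemma image_limits_zero_iff (u v1 v2 : R) : 0 < u ->
  lim_minf (qm (tau u (chi v1 v2 s))) 0 /\ lim_pinf (qn (tau u (chi v1 v2 s))) 0 <->
  v1 = - Lm /\ v2 = - Ln.
Proof.
  intro Hu. split.
  - intros [Hm Hn].
    pose proof (lim_minf_unique _ _ _ Hm (lim_minf_affine _ _ u v1 HLm)) as Em.
    pose proof (lim_pinf_unique _ _ _ Hn (lim_pinf_affine _ _ u v2 HLn)) as En.
    split; nra.
  - intros [-> ->]. split.
    + replace 0 with (u * (Lm + - Lm)) by ring. exact (lim_minf_affine _ _ _ _ HLm).
    + replace 0 with (u * (Ln + - Ln)) by ring. exact (lim_pinf_affine _ _ _ _ HLn).
Qed.

Lemma standard_image_iff (u v1 v2 : R) : 0 < u ->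
  standard (tau u (chi v1 v2 s)) <-> u = / (Lp - Lm) /\ v1 = - Lm /\ v2 = - Ln.
Proof.
  intro Hu. pose proof lim_minf_lt_lim_pinf. split.
  - intros (_ & Hm & Hn & Hp).
    destruct (proj1 (image_limits_zero_iff u v1 v2 Hu) (conj Hm Hn)) as [-> ->].
    split; [|split; reflexivity].
    pose proof (lim_pinf_unique _ _ _ Hp (lim_pinf_affine _ _ u (- Lm) HLp)).
    apply (Rmult_eq_reg_r (Lp - Lm)); [rewrite Rinv_l|]; lra.
  - intros (-> & E1 & E2).
    destruct (proj2 (image_limits_zero_iff _ v1 v2 Hu) (conj E1 E2)) as [Hm Hn].
    split; [exact (positive_ABMN_image s _ v1 v2 Hs Hu)|].
    split; [exact Hm|]. split; [exact Hn|].
    replace 1 with (/ (Lp - Lm) * (Lp + v1)) by (rewrite E1; field; lra).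
    exact (lim_pinf_affine _ _ _ _ HLp).
Qed.

Lemma default_image_iff (u v1 v2 : R) : 0 < u ->
  default_sol (tau u (chi v1 v2 s)) <->
  u = / (qm s 0%Z - qm s (-1)%Z) /\ v1 = - Lm /\ v2 = - Ln.
Proof.
  intro Hu. pose proof m_step_pos. split.
  - intros (_ & Hm & Hn & Hd).
    destruct (proj1 (image_limits_zero_iff u v1 v2 Hu) (conj Hm Hn)) as [-> ->].
    split; [|split; reflexivity]. simpl in Hd.
    apply (Rmult_eq_reg_r (qm s 0%Z - qm s (-1)%Z)); [rewrite Rinv_l|]; lra.
  - intros (-> & E1 & E2).
    destruct (proj2 (image_limits_zero_iff _ v1 v2 Hu) (conj E1 E2)) as [Hm Hn].
    split; [exact (positive_ABMN_image s _ v1 v2 Hs Hu)|].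
    split; [exact Hm|]. split; [exact Hn|]. simpl. field. lra.
Qed.

End Normalization.

Theorem mainTheorem9 :
  ((forall s, positive_ABMN s -> abmn_rel s s) /\
   (forall s t, positive_ABMN s -> positive_ABMN t -> abmn_rel s t -> abmn_rel t s) /\
   (forall s t w, positive_ABMN s -> positive_ABMN t -> positive_ABMN w ->
      abmn_rel s t -> abmn_rel t w -> abmn_rel s w)) /\
  (forall s, positive_ABMN s ->
     (exists t, positive_ABMN t /\ abmn_rel s t /\ standard t /\
        forall t', positive_ABMN t' -> abmn_rel s t' -> standard t' -> t' = t) /\
     (exists t, positive_ABMN t /\ abmn_rel s t /\ default_sol t /\
        forall t', positive_ABMN t' -> abmn_rel s t' -> default_sol t' -> t' = t)).
Proof.
  split; [split; [|split]|].
  - intros s _. left. apply image_of_refl.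
  - intros s t _ _ [H|H]; [right|left]; exact H.
  - intros s t w _ _ _ Hst Htw. left.
    exact (image_of_trans _ _ _ (abmn_rel_image_of _ _ Hst) (abmn_rel_image_of _ _ Htw)).
  - intros s Hs.
    destruct (ex_lim_minf_m s Hs) as [Lm HLm].
    destruct (ex_lim_pinf_m s Hs) as [Lp HLp].
    destruct (ex_lim_pinf_n s Hs) as [Ln HLn].
    pose proof (lim_minf_lt_lim_pinf s Hs Lm Lp HLm HLp).
    pose proof (m_step_pos s Hs).
    split.
    + apply (unique_in_class standard s (/ (Lp - Lm)) (- Lm) (- Ln) Hs).
      * apply Rinv_0_lt_compat; lra.
      * exact (standard_image_iff s Hs Lm Lp Ln HLm HLp HLn).
    + apply (unique_in_class default_sol s (/ (qm s 0%Z - qm s (-1)%Z)) (- Lm) (- Ln) Hs).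
      * apply Rinv_0_lt_compat; lra.
      * exact (default_image_iff s Hs Lm Ln HLm HLn).
Qed.
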